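(* Let $M=\frac32-\sqrt2$ and for $\xi\in[0,1]$ define $$G_\xi(w,f)=(1-f)\,y\left(\tfrac12-y\right)+4M\xi\cdot\frac{w}{1-f},\qquad y=1-\frac{w}{1-f}.$$ Let $\kappa=\frac{1038}{1000}$. For all $w_1,w_2,w_3\in[0,\frac12]$ and $f_1,f_2,f_3\in[\frac1{13},\frac12]$ such that $\frac{1-f_i}{2}\le w_i\le 1-f_i$ for $i=1,2,3$, and for every $\xi\in[0,1]$, $$\tfrac12\bigl(G_\xi(w_1,f_1)+G_\xi(w_2,f_2)\bigr)\le\kappa\cdot G_\xi\!\left(\tfrac{w_1+w_2}{2},\tfrac{f_1+f_2}{2}\right),$$ $$\tfrac13\bigl(G_\xi(w_1,f_1)+G_\xi(w_2,f_2)+G_\xi(w_3,f_3)\bigr)\le\kappa\cdot G_\xi\!\left(\tfrac{w_1+w_2+w_3}{3},\tfrac{f_1+f_2+f_3}{3}\right).$$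
   Context: Here $(1-f)y(\frac12-y)$ with $y=1-\frac{w}{1-f}$ is the quantity $\frac{1-f}{\Phi(1-\frac w{1-f})}$ for the potential $\Phi(x)=\frac{1}{x(\frac12-x)}$; the constant $M=\frac32-\sqrt2$ equals $\sup_{0\le x\le 1/2}\frac{x(\frac12-x)}{1-x}$. *)

From Stdlib Require Import Reals.
Open Scope R_scope.

Definition Mconst : R := 3/2 - sqrt 2.

Definition Gxi (xi w f : R) : R :=
  let y := 1 - w / (1 - f) in
  (1 - f) * y * (1/2 - y) + 4 * Mconst * xi * (w / (1 - f)).

Definition kappa : R := 1038 / 1000.

From Stdlib Require Import Reals Lra Psatz.
Open Scope R_scope.

(* In the coordinates u = 1 - f and y = 1 - w/u one has
   G_xi(w, f) = u h(y) + c (1 - y), with h(y) = y (1/2 - y) = 1/Phi(y) and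
   c = 4 M xi in [0, 7/20].  Averaging n points (w_i, f_i) averages the u_i and
   replaces y by the u-weighted mean Y of the y_i.  The perspective u h(y) is
   concave with defect exactly sum u_i (y_i - Y)^2, whereas the linear term
   loses c sum (y_i - Y), since y is averaged with weights u_i rather than
   uniformly.  As sum u_i (y_i - Y) = 0, that loss equals sum e_i (y_i - Y)
   with e_i = c (S - n u_i) / S, and completing the square against the defect
   costs at most sum e_i^2 / (4 u_i).  This is small because every u_i lies in
   [1/2, 12/13], and the slack kappa - 1 on the term c (1 - Y) >= c/2 pays
   for it. *)

Definition invPhi (y : R) : R := y * (1/2 - y).

Definition Gpersp (c u y : R) : R := u * invPhi y + c * (1 - y).

Lemma Gxi_Gpersp xi w f :
  Gxi xi w f = Gpersp (4 * Mconst * xi) (1 - f) (1 - w / (1 - f)).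
Proof. unfold Gxi, Gpersp, invPhi; cbv zeta; ring. Qed.

Lemma four_Mconst_bounds : 0 <= 4 * Mconst <= 7/20.
Proof.
unfold Mconst.
assert (sqrt 2 * sqrt 2 = 2) by (apply sqrt_sqrt; lra).
assert (0 <= sqrt 2) by apply sqrt_pos.
split; nra.
Qed.

Lemma completed_square_lb a b x : 0 < a -> - (b ^ 2 / (4 * a)) <= a * x ^ 2 + b * x.
Proof.
intros Ha.
assert (E : a * x ^ 2 + b * x + b ^ 2 / (4 * a) = (2 * a * x + b) ^ 2 / (4 * a))
  by (field; lra).
assert (0 <= (2 * a * x + b) ^ 2 / (4 * a))
  by (apply Rle_mult_inv_pos; [apply pow2_ge_0 | lra]).
lra.
Qed.

Lemma sqr_diff_le_on_range x y : 1/2 <= x <= 12/13 -> 1/2 <= y <= 12/13 ->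
  (x - y) ^ 2 <= 3/10 * (x + y) * x * y.
Proof.
intros Hx Hy.
assert (0 <= (x - 1/2) * (y - 1/2)) by nra.
assert (0 <= (12/13 - x) * (12/13 - y)) by nra.
assert (0 <= (x - 1/2) * (12/13 - y)) by nra.
assert (0 <= (12/13 - x) * (y - 1/2)) by nra.
nra.
Qed.

Lemma weighted_dispersion_2 u1 u2 : 1/2 <= u1 <= 12/13 -> 1/2 <= u2 <= 12/13 ->
  let S := u1 + u2 in
  (S - 2 * u1) ^ 2 / u1 + (S - 2 * u2) ^ 2 / u2 <= 3/10 * S ^ 2.
Proof.
intros Hu1 Hu2 S.
assert (E : (S - 2 * u1) ^ 2 / u1 + (S - 2 * u2) ^ 2 / u2 = S * (u1 - u2) ^ 2 / (u1 * u2))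
  by (unfold S; field; lra).
rewrite E.
apply Rmult_le_reg_r with (u1 * u2); [nra |].
unfold Rdiv; rewrite Rmult_assoc, Rinv_l, Rmult_1_r by nra.
pose proof (sqr_diff_le_on_range u1 u2 Hu1 Hu2).
unfold S; nra.
Qed.

Lemma weighted_dispersion_3 u1 u2 u3 :
  1/2 <= u1 <= 12/13 -> 1/2 <= u2 <= 12/13 -> 1/2 <= u3 <= 12/13 ->
  let S := u1 + u2 + u3 in
  (S - 3 * u1) ^ 2 / u1 + (S - 3 * u2) ^ 2 / u2 + (S - 3 * u3) ^ 2 / u3 <= 3/5 * S ^ 2.
Proof.
intros Hu1 Hu2 Hu3 S.
assert (E : (S - 3 * u1) ^ 2 / u1 + (S - 3 * u2) ^ 2 / u2 + (S - 3 * u3) ^ 2 / u3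
  = S * ((u1 - u2) ^ 2 * u3 + (u1 - u3) ^ 2 * u2 + (u2 - u3) ^ 2 * u1) / (u1 * u2 * u3))
  by (unfold S; field; lra).
rewrite E.
assert (Hp : 0 < u1 * u2 * u3) by (apply Rmult_lt_0_compat; [apply Rmult_lt_0_compat |]; lra).
apply Rmult_le_reg_r with (u1 * u2 * u3); [exact Hp |].
unfold Rdiv; rewrite Rmult_assoc, Rinv_l, Rmult_1_r by lra.
pose proof (sqr_diff_le_on_range u1 u2 Hu1 Hu2).
pose proof (sqr_diff_le_on_range u1 u3 Hu1 Hu3).
pose proof (sqr_diff_le_on_range u2 u3 Hu2 Hu3).
assert ((u1 - u2) ^ 2 * u3 + (u1 - u3) ^ 2 * u2 + (u2 - u3) ^ 2 * u1
        <= 3/5 * S * (u1 * u2 * u3)) by (unfold S; nra).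
assert (0 < S) by (unfold S; lra).
nra.
Qed.

Lemma dispersion_bound_2 u1 u2 d1 d2 c :
  1/2 <= u1 <= 12/13 -> 1/2 <= u2 <= 12/13 -> u1 * d1 + u2 * d2 = 0 ->
  0 <= c <= 7/20 ->
  0 <= u1 * d1 ^ 2 + u2 * d2 ^ 2 + c * (d1 + d2) + (kappa - 1) * c.
Proof.
intros Hu1 Hu2 Hd Hc.
pose proof (weighted_dispersion_2 u1 u2 Hu1 Hu2) as W; cbv zeta in W.
set (S := u1 + u2) in *.
assert (HS : 0 < S) by (unfold S; lra).
set (e1 := c * (S - 2 * u1) / S); set (e2 := c * (S - 2 * u2) / S).
assert (Hlin : e1 * d1 + e2 * d2 = c * (d1 + d2)).
{ transitivity (c * (d1 + d2) - 2 * c * (u1 * d1 + u2 * d2) / S).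
  - unfold e1, e2, S; field; lra.
  - rewrite Hd; field; lra. }
assert (Hsq : e1 ^ 2 / (4 * u1) + e2 ^ 2 / (4 * u2)
  = c ^ 2 / (4 * S ^ 2) * ((S - 2 * u1) ^ 2 / u1 + (S - 2 * u2) ^ 2 / u2))
  by (unfold e1, e2; field; repeat split; lra).
assert (Hsq' : e1 ^ 2 / (4 * u1) + e2 ^ 2 / (4 * u2) <= 3/40 * c ^ 2).
{ rewrite Hsq.
  assert (0 <= c ^ 2 / (4 * S ^ 2))
    by (apply Rle_mult_inv_pos; [apply pow2_ge_0 | nra]).
  apply Rle_trans with (c ^ 2 / (4 * S ^ 2) * (3/10 * S ^ 2)).
  - apply Rmult_le_compat_l; assumption.
  - right; field; lra. }
pose proof (completed_square_lb u1 e1 d1 ltac:(lra)).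
pose proof (completed_square_lb u2 e2 d2 ltac:(lra)).
assert (3/40 * c ^ 2 <= (kappa - 1) * c) by (unfold kappa; nra).
lra.
Qed.

Lemma Gpersp_average_2 c u1 u2 y1 y2 Y :
  1/2 <= u1 <= 12/13 -> 1/2 <= u2 <= 12/13 ->
  0 <= y1 <= 1/2 -> 0 <= y2 <= 1/2 ->
  (u1 + u2) * Y = u1 * y1 + u2 * y2 -> 0 <= c <= 7/20 ->
  (1/2) * (Gpersp c u1 y1 + Gpersp c u2 y2) <= kappa * Gpersp c ((u1 + u2) / 2) Y.
Proof.
intros Hu1 Hu2 Hy1 Hy2 HY Hc.
assert (HY' : 0 <= Y <= 1/2) by nra.
assert (0 <= invPhi Y) by (unfold invPhi; nra).
assert (0 <= (kappa - 1) * (u1 + u2) * invPhi Y) by (unfold kappa; nra).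
assert (0 <= (kappa - 1) * c * (1/2 - Y)) by (unfold kappa; nra).
assert (Hdefect : u1 * invPhi y1 + u2 * invPhi y2
  = (u1 + u2) * invPhi Y - (u1 * (y1 - Y) ^ 2 + u2 * (y2 - Y) ^ 2))
  by (unfold invPhi; nra).
pose proof (dispersion_bound_2 u1 u2 (y1 - Y) (y2 - Y) c Hu1 Hu2 ltac:(nra) Hc).
unfold Gpersp; lra.
Qed.

Lemma dispersion_bound_3 u1 u2 u3 d1 d2 d3 c :
  1/2 <= u1 <= 12/13 -> 1/2 <= u2 <= 12/13 -> 1/2 <= u3 <= 12/13 ->
  u1 * d1 + u2 * d2 + u3 * d3 = 0 -> 0 <= c <= 7/20 ->
  0 <= u1 * d1 ^ 2 + u2 * d2 ^ 2 + u3 * d3 ^ 2 + c * (d1 + d2 + d3)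
       + 3/2 * (kappa - 1) * c.
Proof.
intros Hu1 Hu2 Hu3 Hd Hc.
pose proof (weighted_dispersion_3 u1 u2 u3 Hu1 Hu2 Hu3) as W; cbv zeta in W.
set (S := u1 + u2 + u3) in *.
assert (HS : 0 < S) by (unfold S; lra).
set (e1 := c * (S - 3 * u1) / S); set (e2 := c * (S - 3 * u2) / S);
  set (e3 := c * (S - 3 * u3) / S).
assert (Hlin : e1 * d1 + e2 * d2 + e3 * d3 = c * (d1 + d2 + d3)).
{ transitivity (c * (d1 + d2 + d3) - 3 * c * (u1 * d1 + u2 * d2 + u3 * d3) / S).
  - unfold e1, e2, e3, S; field; lra.
  - rewrite Hd; field; lra. }
assert (Hsq : e1 ^ 2 / (4 * u1) + e2 ^ 2 / (4 * u2) + e3 ^ 2 / (4 * u3)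
  = c ^ 2 / (4 * S ^ 2)
    * ((S - 3 * u1) ^ 2 / u1 + (S - 3 * u2) ^ 2 / u2 + (S - 3 * u3) ^ 2 / u3))
  by (unfold e1, e2, e3; field; repeat split; lra).
assert (Hsq' : e1 ^ 2 / (4 * u1) + e2 ^ 2 / (4 * u2) + e3 ^ 2 / (4 * u3)
               <= 3/20 * c ^ 2).
{ rewrite Hsq.
  assert (0 <= c ^ 2 / (4 * S ^ 2))
    by (apply Rle_mult_inv_pos; [apply pow2_ge_0 | nra]).
  apply Rle_trans with (c ^ 2 / (4 * S ^ 2) * (3/5 * S ^ 2)).
  - apply Rmult_le_compat_l; assumption.
  - right; field; lra. }
pose proof (completed_square_lb u1 e1 d1 ltac:(lra)).
pose proof (completed_square_lb u2 e2 d2 ltac:(lra)).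
pose proof (completed_square_lb u3 e3 d3 ltac:(lra)).
assert (3/20 * c ^ 2 <= 3/2 * (kappa - 1) * c) by (unfold kappa; nra).
lra.
Qed.

Lemma Gpersp_average_3 c u1 u2 u3 y1 y2 y3 Y :
  1/2 <= u1 <= 12/13 -> 1/2 <= u2 <= 12/13 -> 1/2 <= u3 <= 12/13 ->
  0 <= y1 <= 1/2 -> 0 <= y2 <= 1/2 -> 0 <= y3 <= 1/2 ->
  (u1 + u2 + u3) * Y = u1 * y1 + u2 * y2 + u3 * y3 -> 0 <= c <= 7/20 ->
  (1/3) * (Gpersp c u1 y1 + Gpersp c u2 y2 + Gpersp c u3 y3)
    <= kappa * Gpersp c ((u1 + u2 + u3) / 3) Y.
Proof.
intros Hu1 Hu2 Hu3 Hy1 Hy2 Hy3 HY Hc.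
assert (HY' : 0 <= Y <= 1/2) by nra.
assert (0 <= invPhi Y) by (unfold invPhi; nra).
assert (0 <= (kappa - 1) * (u1 + u2 + u3) * invPhi Y) by (unfold kappa; nra).
assert (0 <= (kappa - 1) * c * (1/2 - Y)) by (unfold kappa; nra).
assert (Hdefect : u1 * invPhi y1 + u2 * invPhi y2 + u3 * invPhi y3
  = (u1 + u2 + u3) * invPhi Y
    - (u1 * (y1 - Y) ^ 2 + u2 * (y2 - Y) ^ 2 + u3 * (y3 - Y) ^ 2))
  by (unfold invPhi; nra).
pose proof (dispersion_bound_3 u1 u2 u3 (y1 - Y) (y2 - Y) (y3 - Y) c
              Hu1 Hu2 Hu3 ltac:(nra) Hc).
unfold Gpersp; lra.
Qed.

Lemma ratio_coord_bounds u w : 0 < u -> u / 2 <= w <= u -> 0 <= 1 - w / u <= 1/2.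
Proof.
intros Hu Hw.
assert (E : 1 - w / u = (u - w) / u) by (field; lra).
rewrite E; split.
- apply Rle_mult_inv_pos; lra.
- apply Rmult_le_reg_r with u; [exact Hu |].
  unfold Rdiv; rewrite Rmult_assoc, Rinv_l, Rmult_1_r by lra; lra.
Qed.

Theorem lemma18 :
  forall (w1 w2 w3 f1 f2 f3 xi : R),
    0 <= w1 <= 1/2 -> 0 <= w2 <= 1/2 -> 0 <= w3 <= 1/2 ->
    1/13 <= f1 <= 1/2 -> 1/13 <= f2 <= 1/2 -> 1/13 <= f3 <= 1/2 ->
    (1 - f1) / 2 <= w1 <= 1 - f1 ->
    (1 - f2) / 2 <= w2 <= 1 - f2 ->
    (1 - f3) / 2 <= w3 <= 1 - f3 ->
    0 <= xi <= 1 ->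
    (1/2) * (Gxi xi w1 f1 + Gxi xi w2 f2)
      <= kappa * Gxi xi ((w1 + w2) / 2) ((f1 + f2) / 2)
    /\
    (1/3) * (Gxi xi w1 f1 + Gxi xi w2 f2 + Gxi xi w3 f3)
      <= kappa * Gxi xi ((w1 + w2 + w3) / 3) ((f1 + f2 + f3) / 3).
Proof.
intros w1 w2 w3 f1 f2 f3 xi _ _ _ Hf1 Hf2 Hf3 H1 H2 H3 Hxi.
assert (Hc : 0 <= 4 * Mconst * xi <= 7/20)
  by (pose proof four_Mconst_bounds; nra).
pose proof (ratio_coord_bounds (1 - f1) w1 ltac:(lra) H1).
pose proof (ratio_coord_bounds (1 - f2) w2 ltac:(lra) H2).
pose proof (ratio_coord_bounds (1 - f3) w3 ltac:(lra) H3).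
rewrite !Gxi_Gpersp; split.
- replace (1 - (f1 + f2) / 2) with (((1 - f1) + (1 - f2)) / 2) by field.
  apply Gpersp_average_2; try lra.
  field; lra.
- replace (1 - (f1 + f2 + f3) / 3) with (((1 - f1) + (1 - f2) + (1 - f3)) / 3) by field.
  apply Gpersp_average_3; try lra.
  field; lra.
Qed.
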